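(* Let $n\ge1$ and let $A_1,\dots,A_n$ be events in a probability space. Then for every $m\in\{0,1,\dots,n-1\}$, \[ \Pr\Big(\bigcup_{i=1}^n A_i\Big) \ge \frac{1}{n-m}\Bigg(\sum_{k=1}^m (-1)^{k-1}\frac{\binom mk}{\binom nk}\cdot\frac{nk-(m+1)(k-1)}{m-k+1}\sum_{1\le i_1<\dots<i_k\le n}\Pr(A_{i_1}\cap\dots\cap A_{i_k}) + (-1)^m\frac{m+1}{\binom nm}\sum_{1\le i_1<\dots<i_{m+1}\le n}\Pr(A_{i_1}\cap\dots\cap A_{i_{m+1}})\Bigg). \]
   Context: An empty sum (e.g. the first sum when $m=0$) equals $0$. *)

From Stdlib Require Import Reals List Arith.
Import ListNotations.
Open Scope R_scope.

Record prob_space (Omega : Type) := {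
  measurable : (Omega -> Prop) -> Prop;
  Pr : (Omega -> Prop) -> R;
  meas_full : measurable (fun _ => True);
  meas_compl : forall E, measurable E -> measurable (fun w => ~ E w);
  meas_countable_union : forall F : nat -> Omega -> Prop,
      (forall i, measurable (F i)) -> measurable (fun w => exists i, F i w);
  Pr_nonneg : forall E, measurable E -> 0 <= Pr E;
  Pr_full : Pr (fun _ => True) = 1;
  Pr_sigma_additive : forall F : nat -> Omega -> Prop,
      (forall i, measurable (F i)) ->
      (forall i j w, i <> j -> F i w -> F j w -> False) ->
      infinite_sum (fun i => Pr (F i)) (Pr (fun w => exists i, F i w))
}.
Arguments measurable {Omega} _ _.
Arguments Pr {Omega} _ _.

(* All subsets of {0,...,n-1}, each as a strictly increasing list. *)
Fixpoint subsets (n : nat) : list (list nat) :=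
  match n with
  | O => [ [] ]
  | S n' => subsets n' ++ map (fun s => s ++ [n']) (subsets n')
  end.

Definition ksubsets (n k : nat) : list (list nat) :=
  filter (fun s => Nat.eqb (length s) k) (subsets n).

Definition sumR (l : list R) : R := fold_right Rplus 0 l.

Definition inter {Omega : Type} (A : nat -> Omega -> Prop) (s : list nat) : Omega -> Prop :=
  fun w => forall i, In i s -> A i w.

Definition union_upto {Omega : Type} (A : nat -> Omega -> Prop) (n : nat) : Omega -> Prop :=
  fun w => exists i, (i < n)%nat /\ A i w.

Definition Sk {Omega : Type} (P : prob_space Omega) (A : nat -> Omega -> Prop) (n k : nat) : R :=
  sumR (map (fun s => Pr P (inter A s)) (ksubsets n k)).

(* Let p_j be the probability that exactly j of the events occur.  Then
   Pr(A_1 \/ ... \/ A_n) = sum_{j >= 1} p_j and S_k = sum_j C(j,k) p_j, so the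
   bracket equals sum_j g_j p_j, where g_j is the bracket evaluated at
   S_k = C(j,k).  The alternating identity
     sum_k (-1)^k C(m,k) C(j,k) / C(n,k) = C(n-j,m) / C(n,m)
   gives g_0 = 0 and g_j = 1 + (j-1) C(n-j,m) / C(n,m) <= n - m for 1 <= j <= n. *)

From Stdlib Require Import Reals List Arith Lra Lia.
From Stdlib Require Import Classical FunctionalExtensionality PropExtensionality.
Import ListNotations.
Open Scope R_scope.

(* Unlike [C n k], [binom n k] vanishes for [k > n]. *)
Fixpoint binom (n k : nat) : nat :=
  match n, k with
  | _, O => 1%nat
  | O, S _ => 0%nat
  | S n', S k' => (binom n' k' + binom n' (S k'))%nat
  end.

Lemma binom_0_r n : binom n 0 = 1%nat.
Proof. now destruct n. Qed.

Lemma binom_SS n k : binom (S n) (S k) = (binom n k + binom n (S k))%nat.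
Proof. reflexivity. Qed.

Lemma binom_small n : forall k, (n < k)%nat -> binom n k = 0%nat.
Proof.
  induction n as [|n IH]; intros [|k] Hk; try lia; [reflexivity|].
  rewrite binom_SS, !IH; lia.
Qed.

Lemma binom_pos n : forall k, (k <= n)%nat -> (0 < binom n k)%nat.
Proof.
  induction n as [|n IH]; intros [|k] Hk; rewrite ?binom_0_r; try lia.
  rewrite binom_SS. specialize (IH k). lia.
Qed.

Lemma binom_1_r n : binom n 1 = n.
Proof. induction n as [|n IH]; [reflexivity|]. rewrite binom_SS, binom_0_r, IH. lia. Qed.

Lemma binom_diag n : binom n n = 1%nat.
Proof. induction n as [|n IH]; [reflexivity|]. rewrite binom_SS, IH, binom_small; lia. Qed.

Lemma binom_mono_l a b k : (a <= b)%nat -> (binom a k <= binom b k)%nat.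
Proof.
  induction 1 as [|b _ IH]; [lia|].
  destruct k; [rewrite !binom_0_r; lia|rewrite binom_SS; lia].
Qed.

Lemma binom_absorb a : forall k, (S k * binom (S a) (S k) = S a * binom a k)%nat.
Proof.
  induction a as [|a IH]; intros [|k].
  - reflexivity.
  - rewrite binom_SS, !binom_small by lia. lia.
  - rewrite binom_SS, binom_0_r, binom_1_r. lia.
  - rewrite (binom_SS (S a) (S k)), (binom_SS a k).
    pose proof (IH k) as Hk. pose proof (IH (S k)) as HSk.
    rewrite binom_SS in Hk. nia.
Qed.

Lemma binomR_absorb a k :
  INR (S k) * INR (binom (S a) (S k)) = INR (S a) * INR (binom a k).
Proof. rewrite <- !mult_INR. f_equal. apply binom_absorb. Qed.

Lemma binomR_succ_r a k :
  INR (S k) * INR (binom a (S k)) = (INR a - INR k) * INR (binom a k).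
Proof.
  pose proof (f_equal INR (binom_absorb a k)) as H.
  rewrite binom_SS, !mult_INR, plus_INR, !S_INR in H.
  rewrite S_INR. nra.
Qed.

Lemma binomR_pos n k : (k <= n)%nat -> 0 < INR (binom n k).
Proof. intros H. now apply lt_0_INR, binom_pos. Qed.

Lemma C_binom n : forall k, (k <= n)%nat -> C n k = INR (binom n k).
Proof.
  assert (C_0_r : forall p, C p 0 = 1).
  { intros p. unfold C. rewrite Nat.sub_0_r. simpl. field. apply INR_fact_neq_0. }
  induction n as [|n IH]; intros [|k] Hk; try lia; rewrite ?C_0_r, ?binom_0_r; try reflexivity.
  destruct (Nat.eq_dec k n) as [->|Hkn].
  - unfold C. rewrite Nat.sub_diag, binom_diag. change (INR (fact 0)) with 1.
    rewrite Rmult_1_r. apply Rinv_r, INR_fact_neq_0.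
  - rewrite <- pascal, !IH, binom_SS, plus_INR by lia. reflexivity.
Qed.

Fixpoint rsum (f : nat -> R) (N : nat) : R :=
  match N with O => 0 | S N' => rsum f N' + f N' end.

Lemma rsum_ext f g N : (forall i, (i < N)%nat -> f i = g i) -> rsum f N = rsum g N.
Proof. induction N; intros H; simpl; [reflexivity|]. rewrite IHN, H; auto. Qed.

Lemma rsum_plus f g N : rsum (fun i => f i + g i) N = rsum f N + rsum g N.
Proof. induction N; simpl; [lra|]. rewrite IHN; lra. Qed.

Lemma rsum_scal_l c f N : rsum (fun i => c * f i) N = c * rsum f N.
Proof. induction N; simpl; [lra|]. rewrite IHN; lra. Qed.

Lemma rsum_zero N : rsum (fun _ => 0) N = 0.
Proof. induction N; simpl; [lra|]. rewrite IHN; lra. Qed.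

Lemma rsum_shift f N : rsum f (S N) = f 0%nat + rsum (fun i => f (S i)) N.
Proof. induction N; simpl in *; [lra|]. rewrite IHN. lra. Qed.

Lemma rsum_le f g N : (forall i, (i < N)%nat -> f i <= g i) -> rsum f N <= rsum g N.
Proof.
  induction N; intros H; simpl; [lra|].
  pose proof (H N ltac:(lia)). pose proof (IHN (fun i Hi => H i ltac:(lia))). lra.
Qed.

Lemma sumR_map_seq f s N : sumR (map f (seq s N)) = rsum (fun i => f (s + i)%nat) N.
Proof.
  revert s. induction N as [|N IH]; intros s; [reflexivity|].
  rewrite rsum_shift, Nat.add_0_r. cbn [seq map sumR fold_right].
  unfold sumR in IH. rewrite IH.
  f_equal. apply rsum_ext. intros i _. f_equal. lia.
Qed.

Lemma sumR_app l1 l2 : sumR (l1 ++ l2) = sumR l1 + sumR l2.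
Proof. induction l1; simpl; [lra|]. unfold sumR in *. simpl. rewrite IHl1. lra. Qed.

Section Events.
Context {Omega : Type} (P : prob_space Omega).

Lemma event_ext (E F : Omega -> Prop) : (forall w, E w <-> F w) -> E = F.
Proof.
  intros H. apply functional_extensionality. intros w.
  now apply propositional_extensionality.
Qed.

Lemma Pr_ext (E F : Omega -> Prop) : (forall w, E w <-> F w) -> Pr P E = Pr P F.
Proof. intros H. now rewrite (event_ext E F H). Qed.

Lemma measurable_empty : measurable P (fun _ => False).
Proof.
  replace (fun _ : Omega => False) with (fun w : Omega => ~ True)
    by (apply event_ext; tauto).
  apply meas_compl, meas_full.
Qed.

Definition two_events (E F : Omega -> Prop) (i : nat) : Omega -> Prop :=
  match i with O => E | 1%nat => F | _ => fun _ => False end.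

Lemma two_events_union E F :
  (fun w => exists i, two_events E F i w) = (fun w => E w \/ F w).
Proof.
  apply event_ext. intros w. split.
  - intros [[|[|i]] Hi]; simpl in Hi; tauto.
  - intros [H|H]; [exists 0%nat|exists 1%nat]; exact H.
Qed.

Lemma two_events_measurable E F :
  measurable P E -> measurable P F -> forall i, measurable P (two_events E F i).
Proof. intros HE HF [|[|i]]; auto using measurable_empty. Qed.

Lemma measurable_or E F :
  measurable P E -> measurable P F -> measurable P (fun w => E w \/ F w).
Proof.
  intros HE HF. rewrite <- two_events_union.
  now apply meas_countable_union, two_events_measurable.
Qed.

Lemma measurable_and E F :
  measurable P E -> measurable P F -> measurable P (fun w => E w /\ F w).
Proof.
  intros HE HF.
  replace (fun w => E w /\ F w) with (fun w => ~ (~ E w \/ ~ F w))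
    by (apply event_ext; intros w; split; [intros H; split; apply NNPP; tauto|tauto]).
  apply meas_compl, measurable_or; now apply meas_compl.
Qed.

Lemma infinite_sum_const c l : infinite_sum (fun _ => c) l -> c = 0.
Proof.
  intros H. apply NNPP. intros Hc.
  assert (Heps : Rabs c / 2 > 0) by (pose proof (Rabs_pos_lt c Hc); lra).
  destruct (H _ Heps) as [N HN].
  pose proof (HN N (le_n _)) as H1. pose proof (HN (S N) (le_S _ _ (le_n _))) as H2.
  unfold R_dist in *. simpl in H2.
  set (s := sum_f_R0 (fun _ => c) N) in *.
  destruct (Rcase_abs c);
    [rewrite (Rabs_left c) in * by lra | rewrite (Rabs_right c) in * by lra];
    apply Rabs_def2 in H1; apply Rabs_def2 in H2; lra.
Qed.

Lemma Pr_empty : Pr P (fun _ => False) = 0.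
Proof.
  assert (H := Pr_sigma_additive _ P (fun _ _ => False) (fun _ => measurable_empty)
                 (fun _ _ _ _ H _ => H)).
  cbv beta in H.
  rewrite (event_ext (fun _ => exists _ : nat, False) (fun _ => False)) in H by firstorder.
  exact (infinite_sum_const _ _ H).
Qed.

Lemma Pr_disjoint_or E F :
  measurable P E -> measurable P F -> (forall w, E w -> F w -> False) ->
  Pr P (fun w => E w \/ F w) = Pr P E + Pr P F.
Proof.
  intros HE HF Hdisj.
  assert (Hsum := Pr_sigma_additive _ P _ (two_events_measurable E F HE HF)).
  rewrite two_events_union in Hsum.
  apply (uniqueness_sum _ _ _ (Hsum ltac:(intros [|[|i]] [|[|j]] w Hij; simpl;
                                          try tauto; try lia; eauto))).
  intros eps Heps. exists 1%nat. intros N HN.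
  replace (sum_f_R0 (fun i => Pr P (two_events E F i)) N) with (Pr P E + Pr P F).
  { unfold R_dist. rewrite Rminus_diag, Rabs_R0. lra. }
  induction N as [|[|N] IH]; [lia|reflexivity|].
  simpl sum_f_R0 in *. rewrite <- IH by lia. simpl. rewrite Pr_empty. lra.
Qed.

Lemma Pr_split E G :
  measurable P E -> measurable P G ->
  Pr P E = Pr P (fun w => E w /\ G w) + Pr P (fun w => E w /\ ~ G w).
Proof.
  intros HE HG. rewrite <- Pr_disjoint_or.
  - apply Pr_ext. intros w. destruct (classic (G w)); tauto.
  - now apply measurable_and.
  - now apply measurable_and, meas_compl.
  - tauto.
Qed.

End Events.

Fixpoint exactly {Omega} (A : nat -> Omega -> Prop) (n j : nat) : Omega -> Prop :=
  match n with
  | O => fun _ => j = 0%nat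
  | S n' => fun w => match j with
      | O => ~ A n' w /\ exactly A n' 0 w
      | S j' => (A n' w /\ exactly A n' j' w) \/ (~ A n' w /\ exactly A n' (S j') w)
      end
  end.

Lemma ksubsets_0_r n : ksubsets n 0 = [[]].
Proof.
  unfold ksubsets. induction n as [|n IH]; [reflexivity|].
  simpl. rewrite filter_app, IH.
  enough (Hnil : forall l, filter (fun s => length s =? 0) (map (fun s => s ++ [n]) l) = [])
    by now rewrite Hnil.
  induction l as [|s l IHl]; [reflexivity|].
  simpl. rewrite length_app, Nat.add_comm. exact IHl.
Qed.

Lemma ksubsets_SS n k :
  ksubsets (S n) (S k) = ksubsets n (S k) ++ map (fun s => s ++ [n]) (ksubsets n k).
Proof.
  unfold ksubsets. simpl. rewrite filter_app. f_equal.
  induction (subsets n) as [|s l IHl]; [reflexivity|].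
  simpl. rewrite length_app, Nat.add_comm. simpl.
  destruct (Nat.eqb (length s) k); simpl; now rewrite IHl.
Qed.

Lemma inter_snoc {Omega} (A : nat -> Omega -> Prop) s n w :
  inter A (s ++ [n]) w <-> inter A s w /\ A n w.
Proof.
  unfold inter. setoid_rewrite in_app_iff. simpl. firstorder congruence.
Qed.

Section Exactly.
Context {Omega : Type} (P : prob_space Omega) (A : nat -> Omega -> Prop).

Lemma exactly_measurable n :
  (forall i, (i < n)%nat -> measurable P (A i)) -> forall j, measurable P (exactly A n j).
Proof.
  induction n as [|n IH]; intros hA [|j]; simpl.
  - rewrite (event_ext (fun _ => 0%nat = 0%nat) (fun _ => True)) by tauto.
    apply meas_full.
  - rewrite (event_ext (fun _ => S j = 0%nat) (fun _ => False)) by (split; [lia|tauto]).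
    apply measurable_empty.
  - apply measurable_and; [apply meas_compl, hA; lia|apply IH; auto].
  - assert (HAn : measurable P (A n)) by (apply hA; lia).
    assert (Hex := IH (fun i Hi => hA i ltac:(lia))).
    apply measurable_or; apply measurable_and; auto using meas_compl.
Qed.

Lemma exactly_le n j w : exactly A n j w -> (j <= n)%nat.
Proof.
  revert j. induction n as [|n IH]; intros [|j] H; simpl in H; try lia.
  destruct H as [[_ H]|[_ H]]; apply IH in H; lia.
Qed.

Lemma exactly_0 n w : exactly A n 0 w <-> forall i, (i < n)%nat -> ~ A i w.
Proof.
  induction n as [|n IH]; simpl; [split; auto; lia|].
  rewrite IH. split.
  - intros [HAn H] i Hi. destruct (Nat.eq_dec i n) as [->|]; auto. apply H; lia.
  - intros H. split; auto.
Qed.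

(* Conditioning on [A n] shifts the count by one. *)
Lemma rsum_Pr_exactly_S n (c : nat -> R) E :
  (forall i, (i < S n)%nat -> measurable P (A i)) -> measurable P E ->
  rsum (fun j => c j * Pr P (fun w => E w /\ exactly A (S n) j w)) (S (S n)) =
  rsum (fun j => c (S j) * Pr P (fun w => (E w /\ A n w) /\ exactly A n j w)) (S n) +
  rsum (fun j => c j * Pr P (fun w => (E w /\ ~ A n w) /\ exactly A n j w)) (S n).
Proof.
  intros hA HE.
  assert (HAn : measurable P (A n)) by (apply hA; lia).
  assert (Hex := exactly_measurable n (fun i Hi => hA i ltac:(lia))).
  set (a := fun j => Pr P (fun w => (E w /\ A n w) /\ exactly A n j w)).
  set (b := fun j => Pr P (fun w => (E w /\ ~ A n w) /\ exactly A n j w)).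
  assert (Hb0 : Pr P (fun w => E w /\ exactly A (S n) 0 w) = b 0%nat).
  { unfold b. apply Pr_ext. intros w; simpl. tauto. }
  assert (HbS : forall j, Pr P (fun w => E w /\ exactly A (S n) (S j) w) = a j + b (S j)).
  { intros j. unfold a, b. rewrite <- Pr_disjoint_or.
    - apply Pr_ext. intros w; simpl. tauto.
    - now apply measurable_and; [apply measurable_and|].
    - now apply measurable_and; [apply measurable_and, meas_compl|].
    - tauto. }
  assert (Hbn : b (S n) = 0).
  { unfold b. rewrite <- (Pr_empty P). apply Pr_ext. intros w.
    split; [|tauto]. intros [_ H]. apply exactly_le in H. lia. }
  change (rsum (fun j => c j * Pr P (fun w => E w /\ exactly A (S n) j w)) (S (S n)) =
          rsum (fun j => c (S j) * a j) (S n) + rsum (fun j => c j * b j) (S n)).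
  rewrite rsum_shift, Hb0.
  rewrite (rsum_ext _ (fun j => c (S j) * a j + c (S j) * b (S j)))
    by (intros j _; rewrite HbS; ring).
  rewrite rsum_plus, (rsum_shift (fun j => c j * b j)).
  simpl rsum at 2. rewrite Hbn. ring.
Qed.

(* The classical counting identity: a point lying in exactly [j] of the events
   lies in exactly [binom j k] of the [k]-fold intersections. *)
Lemma Pr_inter_ksubsets n :
  (forall i, (i < n)%nat -> measurable P (A i)) ->
  forall k E, measurable P E ->
  sumR (map (fun s => Pr P (fun w => E w /\ inter A s w)) (ksubsets n k)) =
  rsum (fun j => INR (binom j k) * Pr P (fun w => E w /\ exactly A n j w)) (S n).
Proof.
  induction n as [|n IH]; intros hA k E HE.
  - destruct k; [|simpl; ring].
    rewrite ksubsets_0_r. simpl. rewrite Rplus_0_l, Rplus_0_r, Rmult_1_l.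
    apply Pr_ext. intros w. unfold inter. simpl. intuition.
  - assert (hA' : forall i, (i < n)%nat -> measurable P (A i)) by (intros; apply hA; lia).
    assert (HAn : measurable P (A n)) by (apply hA; lia).
    assert (HEA : measurable P (fun w => E w /\ A n w)) by now apply measurable_and.
    assert (HEnA : measurable P (fun w => E w /\ ~ A n w))
      by now apply measurable_and, meas_compl.
    rewrite rsum_Pr_exactly_S by auto.
    destruct k as [|k].
    + rewrite (rsum_ext (fun j => _ * _) (fun j => INR (binom j 0) * _))
        by (intros; now rewrite !binom_0_r).
      rewrite <- !IH by auto. rewrite !ksubsets_0_r. simpl. rewrite !Rplus_0_r.
      assert (Hnil : forall F, Pr P (fun w => F w /\ inter A [] w) = Pr P F)
        by (intros F; apply Pr_ext; unfold inter; simpl; tauto).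
      rewrite !Hnil. now apply Pr_split.
    + rewrite ksubsets_SS, map_app, sumR_app, map_map.
      rewrite (map_ext (fun s => Pr P (fun w => E w /\ inter A (s ++ [n]) w))
                 (fun s => Pr P (fun w => (E w /\ A n w) /\ inter A s w)))
        by (intros s; apply Pr_ext; intros w; rewrite inter_snoc; tauto).
      rewrite !IH by auto.
      rewrite (rsum_ext (fun j => INR (binom j (S k)) * Pr P (fun w => E w /\ exactly A n j w))
        (fun j => INR (binom j (S k)) * Pr P (fun w => (E w /\ A n w) /\ exactly A n j w) +
                  INR (binom j (S k)) * Pr P (fun w => (E w /\ ~ A n w) /\ exactly A n j w))).
      2:{ intros j _. rewrite <- Rmult_plus_distr_l, (Pr_split P _ (A n)).
          - f_equal; f_equal; apply Pr_ext; intros w; tauto.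
          - apply measurable_and; auto. now apply exactly_measurable.
          - exact HAn. }
      rewrite (rsum_ext (fun j => INR (binom (S j) (S k)) * _)
        (fun j => INR (binom j k) * Pr P (fun w => (E w /\ A n w) /\ exactly A n j w) +
                  INR (binom j (S k)) * Pr P (fun w => (E w /\ A n w) /\ exactly A n j w)))
        by (intros; rewrite binom_SS, plus_INR; ring).
      rewrite !rsum_plus. ring.
Qed.

End Exactly.

Section ExactlyCorollaries.
Context {Omega : Type} (P : prob_space Omega) (A : nat -> Omega -> Prop) (n : nat).
Hypothesis hA : forall i, (i < n)%nat -> measurable P (A i).

Lemma Sk_exactly :
  Sk P A n = fun k => rsum (fun j => INR (binom j k) * Pr P (exactly A n j)) (S n).
Proof.
  apply functional_extensionality. intros k. unfold Sk.
  rewrite (map_ext _ (fun s => Pr P (fun w => True /\ inter A s w)))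
    by (intros s; apply Pr_ext; tauto).
  rewrite Pr_inter_ksubsets by auto using meas_full.
  apply rsum_ext. intros j _. f_equal. apply Pr_ext. tauto.
Qed.

Lemma Pr_union_exactly :
  Pr P (union_upto A n) = rsum (fun j => Pr P (exactly A n (S j))) n.
Proof.
  assert (Htotal : rsum (fun j => Pr P (exactly A n j)) (S n) = 1).
  { assert (HS0 := f_equal (fun S => S 0%nat) Sk_exactly). cbv beta in HS0.
    unfold Sk in HS0. rewrite ksubsets_0_r in HS0. cbn [map sumR fold_right] in HS0.
    rewrite (rsum_ext _ (fun j => Pr P (exactly A n j))) in HS0
      by (intros; rewrite binom_0_r; simpl; ring).
    rewrite <- HS0, Rplus_0_r, <- (Pr_full _ P). apply Pr_ext. unfold inter. simpl. tauto. }
  assert (Hsplit := Pr_split P _ _ (meas_full _ P) (exactly_measurable P A n hA 0)).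
  rewrite (Pr_full _ P), <- Htotal, rsum_shift in Hsplit.
  replace (Pr P (union_upto A n)) with (Pr P (fun w => True /\ ~ exactly A n 0 w)).
  - enough (Pr P (fun w => True /\ exactly A n 0 w) = Pr P (exactly A n 0)) by lra.
    apply Pr_ext. tauto.
  - apply Pr_ext. intros w. rewrite exactly_0. unfold union_upto. split.
    + intros [_ H]. apply NNPP. intros Hnone. apply H. intros i Hi HAi.
      apply Hnone. now exists i.
    + intros [i [Hi HAi]]. split; [exact I|]. intros H. exact (H i Hi HAi).
Qed.

End ExactlyCorollaries.

Lemma binomR_succ_l a k :
  INR (S a) * INR (binom a k) = (INR (S a) - INR k) * INR (binom (S a) k).
Proof. rewrite <- binomR_absorb, binomR_succ_r. reflexivity. Qed.

Definition binom_ratio (k j n : nat) : R := INR (binom j k) / INR (binom n k).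

Lemma binom_ratio_S k j n : (k <= n)%nat ->
  binom_ratio (S k) (S j) (S n) = INR (S j) / INR (S n) * binom_ratio k j n.
Proof.
  intros Hk. unfold binom_ratio.
  pose proof (binomR_absorb j k) as Hj. pose proof (binomR_absorb n k) as Hn.
  pose proof (binomR_pos n k Hk).
  assert (0 < INR (S k)) by (apply lt_0_INR; lia).
  assert (0 < INR (S n)) by (apply lt_0_INR; lia).
  replace (INR (binom (S j) (S k))) with (INR (S j) * INR (binom j k) / INR (S k))
    by (rewrite <- Hj; field; lra).
  replace (INR (binom (S n) (S k))) with (INR (S n) * INR (binom n k) / INR (S k))
    by (rewrite <- Hn; field; lra).
  field. lra.
Qed.

Definition alt_binom_sum (M j n : nat) : R :=
  rsum (fun k => (-1) ^ k * INR (binom M k) * binom_ratio k j n) (S M).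

Lemma alt_binom_sum_S M j n : (M <= n)%nat ->
  alt_binom_sum (S M) (S j) (S n) =
  alt_binom_sum M (S j) (S n) - INR (S j) / INR (S n) * alt_binom_sum M j n.
Proof.
  intros HM. unfold alt_binom_sum.
  rewrite (rsum_shift (fun k => (-1) ^ k * INR (binom (S M) k) * binom_ratio k (S j) (S n))),
    (rsum_shift (fun k => (-1) ^ k * INR (binom M k) * binom_ratio k (S j) (S n))), !binom_0_r.
  rewrite (rsum_ext (fun i => (-1) ^ S i * INR (binom (S M) (S i)) * binom_ratio (S i) (S j) (S n))
     (fun i => (-1) ^ S i * INR (binom M (S i)) * binom_ratio (S i) (S j) (S n) +
               (- (INR (S j) / INR (S n))) * ((-1) ^ i * INR (binom M i) * binom_ratio i j n))).
  2:{ intros i Hi. rewrite binom_SS, plus_INR, binom_ratio_S by lia. simpl pow. ring. }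
  rewrite rsum_plus, rsum_scal_l. cbn [rsum].
  rewrite (binom_small M (S M)) by lia. simpl INR. ring.
Qed.

Lemma alt_binom_sum_closed M : forall j n, (M <= n)%nat -> (j <= n)%nat ->
  alt_binom_sum M j n = INR (binom (n - j) M) / INR (binom n M).
Proof.
  induction M as [|M IH]; intros j n HM Hj.
  - unfold alt_binom_sum, binom_ratio. simpl. rewrite !binom_0_r. simpl. field.
  - destruct j as [|j].
    + unfold alt_binom_sum. rewrite rsum_shift, (rsum_ext _ (fun _ => 0)), rsum_zero.
      2:{ intros i _. unfold binom_ratio. simpl. unfold Rdiv. ring. }
      unfold binom_ratio. rewrite !binom_0_r, Nat.sub_0_r. simpl. field.
      apply Rgt_not_eq, binomR_pos; lia.
    + destruct n as [|n]; [lia|].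
      rewrite alt_binom_sum_S, !IH by lia.
      replace (S n - S j)%nat with (n - j)%nat by reflexivity.
      pose proof (binomR_succ_r (n - j) M) as Hnj.
      pose proof (binomR_succ_r (S n) M) as HSn.
      pose proof (binomR_succ_l n M) as Hn.
      pose proof (binomR_pos (S n) M ltac:(lia)).
      pose proof (binomR_pos (S n) (S M) ltac:(lia)).
      rewrite minus_INR in Hnj by lia.
      assert (HMn : INR M < INR (S n)) by (apply lt_INR; lia).
      rewrite !S_INR in *. pose proof (pos_INR n). pose proof (pos_INR M).
      replace (INR (binom (n - j) (S M)))
        with ((INR n - INR j - INR M) * INR (binom (n - j) M) / (INR M + 1))
        by (rewrite <- Hnj; field; lra).
      replace (INR (binom (S n) (S M)))
        with ((INR n + 1 - INR M) * INR (binom (S n) M) / (INR M + 1))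
        by (rewrite <- HSn; field; lra).
      replace (INR (binom n M))
        with ((INR n + 1 - INR M) * INR (binom (S n) M) / (INR n + 1))
        by (rewrite <- Hn; field; lra).
      field. repeat split; lra.
Qed.

Definition bonferroni_weight (m n k : nat) : R :=
  (-1) ^ (k - 1) * (C m k / C n k)
  * ((INR n * INR k - (INR m + 1) * (INR k - 1)) / (INR m - INR k + 1)).

Definition bonferroni_sum (m n : nat) (s : nat -> R) : R :=
  sumR (map (fun k => bonferroni_weight m n k * s k) (seq 1 m))
  + (-1) ^ m * ((INR m + 1) / C n m) * s (m + 1)%nat.

Lemma sumR_map_rsum (w : nat -> R) (l : list nat) (F : nat -> nat -> R) (p : nat -> R) N :
  sumR (map (fun k => w k * rsum (fun j => F j k * p j) N) l) =
  rsum (fun j => sumR (map (fun k => w k * F j k) l) * p j) N.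
Proof.
  induction l as [|k l IH]; cbn [map sumR fold_right].
  - rewrite (rsum_ext _ (fun _ => 0)), rsum_zero by (intros; ring). reflexivity.
  - unfold sumR in IH. rewrite IH, <- rsum_scal_l, <- rsum_plus.
    apply rsum_ext. intros j _. ring.
Qed.

Lemma bonferroni_sum_rsum m n (F : nat -> nat -> R) (p : nat -> R) N :
  bonferroni_sum m n (fun k => rsum (fun j => F j k * p j) N) =
  rsum (fun j => bonferroni_sum m n (F j) * p j) N.
Proof.
  unfold bonferroni_sum. rewrite sumR_map_rsum, <- rsum_scal_l, <- rsum_plus.
  apply rsum_ext. intros j _. ring.
Qed.

Lemma bonferroni_weight_S m n i : (i < m)%nat -> (m < n)%nat ->
  bonferroni_weight m n (S i) =
  (-1) ^ i * (INR (binom m (S i)) + (INR n - INR m) * INR (binom m i)) / INR (binom n (S i)).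
Proof.
  intros Him Hmn. unfold bonferroni_weight.
  rewrite !C_binom by lia. replace (S i - 1)%nat with i by lia.
  pose proof (binomR_succ_r m i) as Hm.
  pose proof (binomR_pos n (S i) ltac:(lia)).
  assert (Hi : INR i < INR m) by (apply lt_INR; lia).
  rewrite S_INR in *.
  replace (INR (binom m i)) with ((INR i + 1) * INR (binom m (S i)) / (INR m - INR i))
    by (rewrite Hm; field; lra).
  field. lra.
Qed.

Lemma bonferroni_last m n : (m < n)%nat ->
  (INR m + 1) / C n m = (INR n - INR m) / INR (binom n (S m)).
Proof.
  intros Hmn. rewrite C_binom by lia.
  pose proof (binomR_succ_r n m) as Hn. rewrite S_INR in Hn.
  pose proof (binomR_pos n (S m) ltac:(lia)).
  assert (INR m < INR n) by (apply lt_INR; lia).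
  replace (INR (binom n m)) with ((INR m + 1) * INR (binom n (S m)) / (INR n - INR m))
    by (rewrite Hn; field; lra).
  pose proof (pos_INR m). field. repeat split; lra.
Qed.

Lemma bonferroni_sum_binom_alt m n j : (m <= n)%nat ->
  bonferroni_sum m (S n) (fun k => INR (binom (S j) k)) =
  1 - alt_binom_sum m (S j) (S n)
  + (INR (S n) - INR m) * (INR (S j) / INR (S n) * alt_binom_sum m j n).
Proof.
  intros Hm. unfold bonferroni_sum. rewrite sumR_map_seq, bonferroni_last by lia.
  rewrite (rsum_ext _ (fun i => (-1) ^ i * INR (binom m (S i)) * binom_ratio (S i) (S j) (S n)
     + (INR (S n) - INR m) * ((-1) ^ i * INR (binom m i) * binom_ratio (S i) (S j) (S n)))).
  2:{ intros i Hi. change (1 + i)%nat with (S i).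
      rewrite bonferroni_weight_S by lia. unfold binom_ratio. field.
      apply Rgt_not_eq, binomR_pos; lia. }
  rewrite rsum_plus, rsum_scal_l.
  unfold alt_binom_sum.
  rewrite (rsum_shift (fun k => (-1) ^ k * INR (binom m k) * binom_ratio k (S j) (S n))).
  rewrite <- (rsum_scal_l (INR (S j) / INR (S n))).
  rewrite (rsum_ext (fun i => INR (S j) / INR (S n) * _)
             (fun i => (-1) ^ i * INR (binom m i) * binom_ratio (S i) (S j) (S n)))
    by (intros i Hi; rewrite binom_ratio_S by lia; ring).
  rewrite (rsum_ext (fun i => (-1) ^ S i * INR (binom m (S i)) * binom_ratio (S i) (S j) (S n))
             (fun i => -1 * ((-1) ^ i * INR (binom m (S i)) * binom_ratio (S i) (S j) (S n))))
    by (intros; simpl pow; ring).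
  rewrite rsum_scal_l. cbn [rsum].
  rewrite Nat.add_1_r, binom_diag. unfold binom_ratio.
  rewrite !binom_0_r. change (INR 1) with 1. field. apply Rgt_not_eq, binomR_pos; lia.
Qed.

Lemma bonferroni_sum_binom m n j : (m < n)%nat -> (1 <= j <= n)%nat ->
  bonferroni_sum m n (fun k => INR (binom j k)) =
  1 + (INR j - 1) * INR (binom (n - j) m) / INR (binom n m).
Proof.
  intros Hmn Hj. destruct n as [|n]; [lia|]. destruct j as [|j]; [lia|].
  rewrite bonferroni_sum_binom_alt, !alt_binom_sum_closed by lia.
  replace (S n - S j)%nat with (n - j)%nat by reflexivity.
  pose proof (binomR_succ_l n m) as Hn.
  pose proof (binomR_pos (S n) m ltac:(lia)).
  assert (INR m < INR (S n)) by (apply lt_INR; lia).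
  assert (0 < INR (S n)) by (apply lt_0_INR; lia).
  replace (INR (binom n m)) with ((INR (S n) - INR m) * INR (binom (S n) m) / INR (S n))
    by (rewrite <- Hn; field; lra).
  field. repeat split; lra.
Qed.

Lemma bonferroni_sum_binom_le m n j : (m < n)%nat -> (1 <= j <= n)%nat ->
  bonferroni_sum m n (fun k => INR (binom j k)) <= INR n - INR m.
Proof.
  intros Hmn Hj. rewrite bonferroni_sum_binom by lia.
  pose proof (binomR_pos n m ltac:(lia)).
  assert (Hkey : (INR j - 1) * INR (binom (n - j) m) <= (INR n - INR m - 1) * INR (binom n m)).
  { destruct (Nat.lt_ge_cases (n - j) m).
    - rewrite binom_small by lia. simpl INR.
      assert (INR m + 1 <= INR n) by (rewrite <- S_INR; apply le_INR; lia). nra.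
    - assert (INR (binom (n - j) m) <= INR (binom n m)) by (apply le_INR, binom_mono_l; lia).
      assert (INR j + INR m <= INR n) by (rewrite <- plus_INR; apply le_INR; lia).
      assert (1 <= INR j) by (apply (le_INR 1); lia).
      pose proof (pos_INR (binom (n - j) m)). nra. }
  apply (Rmult_le_reg_r (INR (binom n m))); [lra|].
  unfold Rdiv. rewrite Rmult_plus_distr_r, Rmult_assoc, Rinv_l, Rmult_1_r by lra. lra.
Qed.

Lemma bonferroni_sum_binom_0 m n : bonferroni_sum m n (fun k => INR (binom 0 k)) = 0.
Proof.
  unfold bonferroni_sum. rewrite sumR_map_seq, (rsum_ext _ (fun _ => 0)), rsum_zero.
  - rewrite Nat.add_1_r. simpl. ring.
  - intros i _. simpl. ring.
Qed.

Theorem corollary5 (Omega : Type) (P : prob_space Omega)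
  (n : nat) (A : nat -> Omega -> Prop)
  (hn : (1 <= n)%nat)
  (hA : forall i, (i < n)%nat -> measurable P (A i))
  (m : nat) (hm : (m <= n - 1)%nat) :
  Pr P (union_upto A n) >=
  / (INR n - INR m) *
  ( sumR (map (fun k =>
        (-1) ^ (k - 1) * (C m k / C n k)
        * ((INR n * INR k - (INR m + 1) * (INR k - 1)) / (INR m - INR k + 1))
        * Sk P A n k) (seq 1 m))
    + (-1) ^ m * ((INR m + 1) / C n m) * Sk P A n (m + 1) ).
Proof.
  change (Pr P (union_upto A n) >= / (INR n - INR m) * bonferroni_sum m n (Sk P A n)).
  assert (Hmn : (m < n)%nat) by lia.
  assert (Hnm : 0 < INR n - INR m) by (pose proof (lt_INR m n Hmn); lra).
  rewrite Pr_union_exactly, Sk_exactly, bonferroni_sum_rsum, rsum_shift,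
    bonferroni_sum_binom_0, Rmult_0_l, Rplus_0_l by exact hA.
  assert (Hle : rsum (fun j => bonferroni_sum m n (fun k => INR (binom (S j) k))
                               * Pr P (exactly A n (S j))) n
                <= (INR n - INR m) * rsum (fun j => Pr P (exactly A n (S j))) n).
  { rewrite <- rsum_scal_l. apply rsum_le. intros j Hj.
    apply Rmult_le_compat_r.
    - now apply Pr_nonneg, exactly_measurable.
    - apply bonferroni_sum_binom_le; lia. }
  apply Rle_ge, (Rmult_le_reg_l (INR n - INR m)); [exact Hnm|].
  rewrite <- Rmult_assoc, Rinv_r, Rmult_1_l by lra. exact Hle.
Qed.
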